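(* Fix $p,\epsilon\in(0,1)$ and let $G$ be a graph on $n$ vertices. Let $A$ be the set of paths of length $2$ in $G$ that are not $(p,\epsilon)$-admissible. Then \[\sum_{xyz\in A}\frac1{\deg y}<\frac{3n}{2p^2\epsilon},\] where the sum is over unlabeled paths (each path $xyz=zyx$ counted once) and $\deg y$ is the degree of the middle vertex $y$ in $G$.
   Context: For a graph $G$ and a path $wuw'$ of length $2$ in $G$: choose $U\subseteq V(G)\setminus\{u\}$ by including each vertex other than $u$ independently with probability $p$, and let $A_{wuw'}$ be the event that $G$ contains a path $ww_1\cdots w_{k-1}w'$ of length $k\ge 2$ from $w$ to $w'$ with $w_1,\ldots,w_{k-1}\in U$. The path $wuw'$ is $(p,\epsilon)$-admissible if $\Pr[A_{wuw'}]\ge1-\epsilon$. *)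

From HB Require Import structures.
From mathcomp Require Import all_boot all_order all_algebra.
From mathcomp Require Import boolp reals.
Set Implicit Arguments. Unset Strict Implicit. Unset Printing Implicit Defensive.
Import Order.TTheory GRing.Theory Num.Theory.
Local Open Scope ring_scope.

Definition simple_graph (T : finType) (e : rel T) : Prop :=
  symmetric e /\ irreflexive e.

Definition deg (T : finType) (e : rel T) (y : T) : nat := #|[set v | e y v]|.

Definition path2 (T : finType) (e : rel T) (x y z : T) : bool :=
  [&& e x y, e y z & x != z].

(* Event A_{w u w'} for a given outcome U: G contains a path
   w w_1 ... w_{k-1} w' of length k >= 2 (vertices pairwise distinct)
   with all internal vertices w_1..w_{k-1} in U.
   The sequence s = [:: w_1; ...; w_{k-1}; w'] has size k. *)
Definition A_event (T : finType) (e : rel T) (U : {set T}) (w w' : T) : Prop :=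
  exists s : seq T,
    [/\ (2 <= size s)%N, path e w s, last w s = w', uniq (w :: s)
      & all (fun v => v \in U) (take (size s).-1 s)].

(* Pr[A_{wuw'}] where U subset of V(G)\{u} contains each vertex other than u
   independently with probability p. *)
Definition prob_A (R : realType) (T : finType) (e : rel T) (p : R) (w u w' : T) : R :=
  \sum_(U : {set T} | u \notin U)
     (p ^+ #|U| * (1 - p) ^+ (#|T| - 1 - #|U|) * (if `[< A_event e U w w' >] then 1 else 0)).

Definition admissible (R : realType) (T : finType) (e : rel T) (p eps : R) (w u w' : T) : Prop :=
  prob_A e p w u w' >= 1 - eps.

(* Sum over unlabeled non-admissible paths xyz of 1/deg y. Each unordered path
   xyz = zyx is counted once by requiring enum_rank x < enum_rank z. *)
Definition nonadm_sum (R : realType) (T : finType) (e : rel T) (p eps : R) : R :=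
  \sum_(t : T * T * T |
        [&& path2 e t.1.1 t.1.2 t.2,
            (enum_rank t.1.1 < enum_rank t.2)%N
          & ~~ `[< admissible e p eps t.1.1 t.1.2 t.2 >]])
     ((deg e t.1.2)%:R)^-1.

(* Keep each vertex in a random set W independently with probability p, and call
   a path xyz bad for W when x, y, z are in W but no path of length at least 2
   from x to z has all its inner vertices in W \ {y}.  The event A_{xyz} ignores
   x, y and z, so xyz is bad with probability p^3 (1 - Pr[A_{xyz}]), which exceeds
   p^3 eps when xyz is not admissible.  On the other hand, for every fixed W the
   bad paths satisfy sum 1/deg y <= 3|W|/2.  Indeed, take a breadth-first forest
   of G[W].  If neither x nor z is a child of y, the tree walks from x and z up
   to their common root avoid y, and joining them gives an x-z path through
   W \ {y}, of length at least 2 unless one of x, z is the parent of the other;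
   then y is the only common W-neighbour of these two.  Charging 1/deg_W(y) to
   the child of y in the first case and 1/2 to the child of the other endpoint in
   the second, every vertex pays at most 3/2.  Taking expectations,
   p^3 eps sum_{non-admissible} 1/deg y < 3pn/2. *)

From HB Require Import structures.
From mathcomp Require Import all_boot all_order all_algebra.
From mathcomp Require Import boolp reals.
From mathcomp Require Import ring lra zify.
Set Implicit Arguments. Unset Strict Implicit. Unset Printing Implicit Defensive.
Import Order.TTheory GRing.Theory Num.Theory.

Lemma path_cat_rev_belast (T : eqType) (r : rel T) x z s1 s2 :
  symmetric r -> path r x s1 -> path r z s2 -> last x s1 = last z s2 ->
  path r x (s1 ++ rev (belast z s2)) /\ last x (s1 ++ rev (belast z s2)) = z.
Proof.
move=> rsym p1 p2 l12; rewrite cat_path last_cat p1 l12 rev_path.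
split; first by apply: sub_path p2 => u v; rewrite rsym.
by case: s2 {p2 l12} => [|c s2] //=; rewrite rev_cons last_rcons.
Qed.

Local Open Scope ring_scope.

Lemma sum_triple (R : nmodType) (T : finType) (F : T -> T -> T -> R) :
  \sum_(t : T * T * T) F t.1.1 t.1.2 t.2 = \sum_x \sum_y \sum_z F x y z.
Proof.
rewrite (pair_bigA _ (fun x y => \sum_z F x y z)) /=.
by rewrite (pair_bigA _ (fun p z => F p.1 p.2 z)).
Qed.

Lemma sum_involution_pairs_le (R : numDomainType) (I : finType) (f : I -> I)
    (P : pred I) (F : I -> R) :
  involutive f -> (forall i, P i -> ~~ P (f i)) -> (forall i, 0 <= F i) ->
  \sum_(i | P i) (F i + F (f i)) <= \sum_i F i.
Proof.
move=> fK Pf F0; rewrite big_split /= [X in _ + X](reindex_inj (inv_inj fK)) /=.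
under [X in _ + X]eq_bigr => i _ do rewrite fK.
rewrite [X in X + _]big_mkcond [X in _ + X]big_mkcond -big_split /=.
apply: ler_sum => i _; case Pi: (P i); last by case: ifP; rewrite ?add0r.
by rewrite /= (negbTE (Pf _ Pi)) addr0.
Qed.

Lemma big_set_splitU1 (V : nmodType) (T : finType) (v : T) (F : {set T} -> V) :
  \sum_W F W = \sum_(U : {set T} | v \notin U) (F U + F (v |: U)).
Proof.
rewrite (bigID (fun W : {set T} => v \in W)) /= addrC big_split /=; congr (_ + _).
rewrite (reindex_onto (fun U => v |: U) (fun W => W :\ v)) /=; last first.
  by move=> W vW; rewrite setD1K.
apply: eq_bigl => U; rewrite setU11 /=.
by apply/eqP/idP => [<- | vU]; [rewrite setD11 | rewrite setU1K].
Qed.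

(* [h] is the depth and [par] the parent map of a breadth-first spanning forest
   of [g]; the roots are the vertices of depth 0, one per connected component,
   and [par] is unconstrained at the roots. *)
Definition bfs_forest (T : finType) (g : rel T) (h : T -> nat) (par : T -> T) :=
  [/\ forall a, (0 < h a)%N -> g a (par a) /\ h (par a) = (h a).-1,
      forall a b, g a b -> (h b <= (h a).+1)%N
    & forall a b, h a = 0%N -> h b = 0%N -> connect g a b -> a = b].

Section BfsForestExists.
Variables (T : finType) (g : rel T).
Hypothesis gsym : symmetric g.

Let rt := fingraph.root g.

Let walk_from_root a k :=
  `[< exists s, [/\ size s = k, path g (rt a) s & last (rt a) s = a] >].

Let walk_exists a : exists k, walk_from_root a k.
Proof.
have /connectP [s ps ls] : connect g (rt a) a.
  by rewrite (sym_connect_sym gsym) connect_root.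
by exists (size s); apply/asboolP; exists s.
Qed.

Let h a := ex_minn (walk_exists a).

Let h_walk a : exists s, [/\ size s = h a, path g (rt a) s & last (rt a) s = a].
Proof. by rewrite /h; case: ex_minnP => k /asboolP. Qed.

Let h_min a s : path g (rt a) s -> last (rt a) s = a -> (h a <= size s)%N.
Proof. by move=> ps ls; rewrite /h; case: ex_minnP => k _; apply; apply/asboolP; exists s. Qed.

Let rt_edge a b : g a b -> rt a = rt b.
Proof. by move=> ab; apply/(fingraph.rootP (sym_connect_sym gsym))/connect1. Qed.

Let h_edge a b : g a b -> (h b <= (h a).+1)%N.
Proof.
move=> ab; have [s [<- ps ls]] := h_walk a.
rewrite -(size_rcons s b) h_min // ?last_rcons //.
by rewrite -(rt_edge ab) rcons_path ps ls.
Qed.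

Let parent_exists a : (0 < h a)%N -> exists q, g a q && (h q == (h a).-1).
Proof.
have [s [sz ps ls]] := h_walk a; case/lastP: s sz ps ls => [<- //|s q].
rewrite size_rcons rcons_path last_rcons => sz /andP [ps qa] aq _; subst q.
set q := last (rt a) s in qa *; exists q; rewrite gsym qa -sz /= eqn_leq.
have := h_edge qa; rewrite -sz ltnS => ->.
by rewrite h_min // (rt_edge qa).
Qed.

Lemma bfs_forest_exists : exists h par, bfs_forest g h par.
Proof.
pose par a := odflt a [pick q | g a q && (h q == (h a).-1)].
exists h, par; split=> [a ha | | a b ha hb ab].
- rewrite /par; case: pickP => [q /andP [-> /eqP //] | none] /=.
  by have [q qa] := parent_exists ha; move: (none q); rewrite qa.
- exact: h_edge.
- have root_h0 c : h c = 0%N -> rt c = c.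
    by move=> hc; have [[|? ?] [] //] := h_walk c; rewrite hc.
  rewrite -(root_h0 a ha) -(root_h0 b hb).
  by apply/(fingraph.rootP (sym_connect_sym gsym)).
Qed.

End BfsForestExists.

Section BfsForestPaths.
Variables (T : finType) (g : rel T) (h : T -> nat) (par : T -> T).
Hypotheses (gsym : symmetric g) (girr : irreflexive g).
Hypothesis forest : bfs_forest g h par.

Definition to_parent u v := (0 < h u)%N && (v == par u).
Definition tree_edge u v := to_parent u v || to_parent v u.
Definition ancestors a := traject par (par a) (h a).

Lemma to_parent_edge u v : to_parent u v -> g u v.
Proof. by case/andP=> hu /eqP ->; case: forest => /(_ u hu) []. Qed.

Lemma tree_edge_sym : symmetric tree_edge.
Proof. by move=> u v; rewrite /tree_edge orbC. Qed.

Lemma tree_edge_sub : subrel tree_edge g.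
Proof. by move=> u v /orP [] /to_parent_edge //; rewrite gsym. Qed.

Lemma h_par a : (0 < h a)%N -> h (par a) = (h a).-1.
Proof. by case: forest => /(_ a) H _ _ /H []. Qed.

Lemma h_iter_par n a : (n <= h a)%N -> h (iter n par a) = (h a - n)%N.
Proof.
elim: n a => [|n IHn] a ha; first by rewrite subn0.
by rewrite iterSr IHn h_par //; lia.
Qed.

Lemma path_ancestors a : path to_parent a (ancestors a).
Proof.
suff walk n b : (n <= h b)%N -> path to_parent b (traject par (par b) n) by exact: walk.
elim: n b => // n IHn b hb.
by rewrite trajectS /= /to_parent eqxx IHn ?h_par; lia.
Qed.

Lemma h_last_ancestors a : h (last a (ancestors a)) = 0%N.
Proof. by rewrite last_traject h_iter_par // subnn. Qed.

Lemma connect_ancestors a : connect g a (last a (ancestors a)).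
Proof.
apply/connectP; exists (ancestors a) => //.
exact: (sub_path to_parent_edge (path_ancestors a)).
Qed.

Lemma mem_ancestors a v : v \in ancestors a -> to_parent a v \/ ((h v).+2 <= h a)%N.
Proof.
case/trajectP=> i ilt ->; rewrite -iterSr h_iter_par //.
case: i ilt => [|i] ilt; last by right; lia.
by left; rewrite /to_parent eqxx andbT; lia.
Qed.

(* Ancestors of [a] other than its parent have depth at most [h a - 2], which is
   below [h y] since [h a <= h y + 1]. *)
Lemma ancestors_avoid y a : g y a -> ~~ to_parent a y -> y \notin ancestors a.
Proof.
move=> ya nay; apply/negP => /mem_ancestors [ay | hy]; first by rewrite ay in nay.
by case: forest => _ /(_ y a ya) => hay _; lia.
Qed.

Lemma tree_path_avoiding y x z : g y x -> g y z -> x != z ->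
    ~~ to_parent x y -> ~~ to_parent z y -> ~~ tree_edge x z ->
  exists s, [/\ (2 <= size s)%N, path g x s, last x s = z, uniq (x :: s) & y \notin s].
Proof.
move=> yx yz xz nxy nzy nxz.
have tree_path a : path tree_edge a (ancestors a).
  by apply: sub_path (path_ancestors a) => u v tuv; rewrite /tree_edge tuv.
have same_root : last x (ancestors x) = last z (ancestors z).
  case: forest => _ _; apply; rewrite ?h_last_ancestors //.
  have back_to_x : connect g (last x (ancestors x)) x.
    by rewrite (sym_connect_sym gsym) connect_ancestors.
  apply: connect_trans back_to_x _.
  apply: connect_trans (connect_ancestors z).
  by apply: connect_trans (connect1 yz); apply: connect1; rewrite gsym.
have [walk last_walk] := path_cat_rev_belast tree_edge_sym (tree_path x) (tree_path z) same_root.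
have y_walk : y \notin ancestors x ++ rev (belast z (ancestors z)).
  rewrite mem_cat mem_rev negb_or ancestors_avoid //=.
  apply: contra (ancestors_avoid yz nzy) => /mem_belast.
  by rewrite inE => /orP [/eqP zy | //]; move: yz; rewrite zy girr.
case: (shortenP walk) last_walk => s ps us sub ls; exists s; split => //.
- case: s ps ls {us sub} => [|c [|d s]] //=; first by move=> _ zx; rewrite zx eqxx in xz.
  by rewrite andbT => xc cz; rewrite -cz xc in nxz.
- exact: (sub_path tree_edge_sub ps).
- exact: contra (sub y) y_walk.
Qed.

End BfsForestPaths.

Lemma A_event_common_nbr (T : finType) (e : rel T) (U : {set T}) x v z :
  e x v -> e v z -> v \in U -> uniq [:: x; v; z] -> A_event e U x z.
Proof. by move=> xv vz vU uxvz; exists [:: v; z]; rewrite /= xv vz vU. Qed.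

Lemma A_event_eq (T : finType) (e : rel T) (U U' : {set T}) x z :
  (forall v, v != x -> v != z -> (v \in U) = (v \in U')) -> A_event e U x z -> A_event e U' x z.
Proof.
move=> UU' [s [sz ps ls us inU]]; exists s; split => //.
case/lastP: s sz ps ls us inU => [//|s c] _ _; rewrite last_rcons => -> {c}.
rewrite size_rcons -cats1 take_size_cat //= cats1 rcons_uniq mem_rcons inE.
rewrite negb_or => /andP [/andP [xz xs] /andP [zs _]] /allP inU.
apply/allP => v vs; rewrite -UU' ?inU //.
  by apply: contraNneq xs => <-.
by apply: contraNneq zs => <-.
Qed.

Definition bad_path (T : finType) (e : rel T) (W : {set T}) x y z :=
  [&& y \in W, x \in W, z \in W & ~~ `[< A_event e (W :\ y) x z >]].

Definition induced (T : finType) (e : rel T) (W : {set T}) : rel T :=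
  fun a b => [&& e a b, a \in W & b \in W].

Section Charging.
Variable R : realFieldType.
Variables (T : finType) (e : rel T) (W : {set T}) (h : T -> nat) (par : T -> T).
Hypotheses (esym : symmetric e) (eirr : irreflexive e).
Hypothesis forest : bfs_forest (induced e W) h par.

Local Notation to_parent := (to_parent h par).

Lemma edge_neq a b : e a b -> a != b.
Proof. by apply: contraTneq => ->; rewrite eirr. Qed.

Lemma induced_sym : symmetric (induced e W).
Proof. by move=> a b; rewrite /induced esym [(a \in W) && _]andbC. Qed.

Lemma induced_irr : irreflexive (induced e W).
Proof. by move=> a; rewrite /induced eirr. Qed.

Lemma induced_path_A_event y x z s :
    (2 <= size s)%N -> path (induced e W) x s -> last x s = z -> uniq (x :: s) ->
  y \notin s -> A_event e (W :\ y) x z.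
Proof.
move=> sz ps ls us ys; exists s; split => //.
  by apply: sub_path ps => a b /and3P [].
have /allP sW : all (fun v => v \in W) s.
  by elim: s x ps {sz ls us ys} => //= b s IHs a /andP [/and3P [_ _ ->] /IHs].
apply/allP => v /mem_take vs; rewrite in_setD1 sW // andbT.
by apply: contraNneq ys => <-.
Qed.

Definition sole_common_nbr y x :=
  (0 < h x)%N && [forall v, [&& v \in W, e v x & e v (par x)] == (v == y)].

Lemma sole_common_nbr_uniq x y y' :
  sole_common_nbr y x -> sole_common_nbr y' x -> y = y'.
Proof.
move=> /andP [_ /forallP /(_ y') /eqP E] /andP [_ /forallP /(_ y') /eqP].
by rewrite E eqxx => /eqP.
Qed.

Lemma bad_path_cases x y z :
    path2 e x y z -> [&& y \in W, x \in W & z \in W] -> ~ A_event e (W :\ y) x z ->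
  [\/ to_parent x y, to_parent z y, sole_common_nbr y x /\ z = par x
    | sole_common_nbr y z /\ x = par z].
Proof.
move=> /and3P [xy yz xz] /and3P [yW xW zW] nA.
have [cx | ncx] := boolP (to_parent x y); first by constructor 1.
have [cz | ncz] := boolP (to_parent z y); first by constructor 2.
have unique_common v : v \in W -> e v x -> e v z -> v = y.
  move=> vW vx vz; apply/eqP; apply: contraT => vy; case: nA.
  apply: (@A_event_common_nbr _ _ _ _ v) => //; [by rewrite esym | by rewrite in_setD1 vy |].
  by rewrite /= !inE negb_or xz eq_sym !edge_neq.
have sole a b : to_parent a b -> e y a -> e y b ->
    (forall v, v \in W -> e v a -> e v b -> v = y) -> sole_common_nbr y a /\ b = par a.
  move=> /andP [ha /eqP ->] ya yb uniq_ab; split => //; rewrite /sole_common_nbr ha.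
  apply/forallP => w; apply/eqP; apply/idP/idP => [/and3P [wW wa wb] | /eqP ->].
    exact/eqP/uniq_ab.
  by rewrite yW ya.
have [txz | ntxz] := boolP (to_parent x z).
  by constructor 3; apply: sole => //; rewrite esym.
have [tzx | ntzx] := boolP (to_parent z x).
  constructor 4; apply: sole => //; first by rewrite esym.
  by move=> v vW vz vx; apply: unique_common.
have g_yx : induced e W y x by rewrite /induced esym xy yW xW.
have g_yz : induced e W y z by rewrite /induced yz yW zW.
have [|s [sz ps ls us ys]] :=
  tree_path_avoiding induced_sym induced_irr forest g_yx g_yz xz ncx ncz.
  by rewrite /tree_edge negb_or ntxz ntzx.
by case: nA; apply: induced_path_A_event ps ls us ys.
Qed.

Definition child_charge x y z : R :=
  if to_parent x y && induced e W y z then (deg (induced e W) y)%:R^-1 else 0.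

Definition link_charge x y z : R :=
  if sole_common_nbr y x && (z == par x) then 2^-1 else 0.

Definition charge x y z := child_charge x y z + link_charge x y z.

Lemma child_charge_ge0 x y z : 0 <= child_charge x y z.
Proof. by rewrite /child_charge; case: ifP; rewrite ?invr_ge0. Qed.

Lemma link_charge_ge0 x y z : 0 <= link_charge x y z.
Proof. by rewrite /link_charge; case: ifP; rewrite ?invr_ge0. Qed.

Lemma parent_edge x : (0 < h x)%N -> induced e W (par x) x.
Proof. by case: forest => /(_ x) H _ _ /H [+ _]; rewrite induced_sym. Qed.

Lemma mem_W_of_h_gt0 x : (0 < h x)%N -> x \in W.
Proof. by move/parent_edge/and3P => []. Qed.

Lemma deg_gt0 (r : rel T) y x : r y x -> (0 < deg r y)%N.
Proof. by move=> yx; rewrite /deg card_gt0; apply/set0Pn; exists x; rewrite inE. Qed.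

Lemma sum_if_edge (r : rel T) y (c : R) :
  \sum_z (if r y z then c else 0) = c *+ deg r y.
Proof. by rewrite /deg -sumr_const [RHS]big_mkcond; apply: eq_bigr => z _; rewrite inE. Qed.

Lemma sum_child_charge x :
  \sum_y \sum_z child_charge x y z = if (0 < h x)%N then 1 else 0.
Proof.
rewrite /child_charge /to_parent; have [hx0 | hx] := posnP (h x).
  by rewrite big1 // => y _; rewrite big1.
rewrite (bigD1 (par x)) //= [X in _ + X]big1 ?addr0 => [|y ny]; last first.
  by rewrite big1 // => z _; rewrite (negbTE ny).
rewrite eqxx /= sum_if_edge -[_^-1 *+ _]mulr_natr mulVf // pnatr_eq0 -lt0n.
exact: deg_gt0 (parent_edge hx).
Qed.

Lemma sum_link_charge x :
  \sum_y \sum_z link_charge x y z <= if (0 < h x)%N then 2^-1 else 0.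
Proof.
have inner y : \sum_z link_charge x y z = if sole_common_nbr y x then 2^-1 else 0.
  rewrite /link_charge; case: ifP => _ /=; last by rewrite big1.
  by rewrite -big_mkcond big_pred1_eq.
under eq_bigr => y _ do rewrite inner.
case: (pickP (sole_common_nbr^~ x)) => [y0 s0 | none]; last first.
  by rewrite big1 => [|y _]; [case: ifP; rewrite ?invr_ge0 | rewrite none].
rewrite (bigD1 y0) //= s0 big1 ?addr0 => [|y ny]; last first.
  by case: ifP => // sy; case/eqP: ny; apply: sole_common_nbr_uniq sy s0.
by case/andP: s0 => ->.
Qed.

Lemma sum_charge_le :
  \sum_x \sum_y \sum_z charge x y z <= 3 / 2 * #|W|%:R.
Proof.
apply: (le_trans (y := \sum_x (if x \in W then 3 / 2 else 0))); last first.
  by rewrite -big_mkcond sumr_const mulr_natr.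
apply: ler_sum => x _.
under eq_bigr => y _ do rewrite big_split /=.
rewrite big_split /= sum_child_charge.
have := sum_link_charge x; case: ifP => hx; last by rewrite add0r; case: ifP; lra.
by rewrite mem_W_of_h_gt0 //; lra.
Qed.

Lemma deg_induced_le y : (deg (induced e W) y <= deg e y)%N.
Proof. by apply: subset_leq_card; apply/subsetP => v; rewrite !inE => /and3P []. Qed.

Lemma inv_deg_le_charge x y z : path2 e x y z -> bad_path e W x y z ->
  (deg e y)%:R^-1 <= charge x y z + charge z y x.
Proof.
move=> pxyz /and4P [yW xW zW /asboolPn nA].
have := bad_path_cases pxyz; rewrite yW xW zW => /(_ isT nA) cases.
case/and3P: pxyz => xy yz xz.
have yx : induced e W y x by rewrite /induced esym xy yW xW.
have yz' : induced e W y z by rewrite /induced yz yW zW.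
have le_child : (deg e y)%:R^-1 <= (deg (induced e W) y)%:R^-1 :> R.
  have deg_pos : (0 < deg (induced e W) y)%N := deg_gt0 yx.
  rewrite lef_pV2 ?posrE ?ltr0n ?ler_nat ?deg_induced_le //.
  exact: leq_trans deg_pos (deg_induced_le y).
have le_half : (deg e y)%:R^-1 <= 2^-1 :> R.
  rewrite lef_pV2 ?posrE ?ltr0n ?(deg_gt0 yz) // ler_nat.
  have := cards2 x z; rewrite xz => <-.
  apply: subset_leq_card; apply/subsetP => v; rewrite !inE.
  by case/orP => /eqP ->; rewrite // esym.
rewrite /charge; move: (child_charge_ge0 x y z) (child_charge_ge0 z y x).
move: (link_charge_ge0 x y z) (link_charge_ge0 z y x).
case: cases => [cx | cz | [sx zx] | [sz xz']].
- by rewrite [child_charge x y z]/child_charge cx yz' /=; lra.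
- by rewrite [child_charge z y x]/child_charge cz yx /=; lra.
- by rewrite [link_charge x y z]/link_charge sx zx eqxx /=; lra.
- by rewrite [link_charge z y x]/link_charge sz xz' eqxx /=; lra.
Qed.

Lemma sum_bad_paths_le :
  \sum_(t | path2 e t.1.1 t.1.2 t.2 && (enum_rank t.1.1 < enum_rank t.2)%N)
      (deg e t.1.2)%:R^-1 * (bad_path e W t.1.1 t.1.2 t.2)%:R
    <= 3 / 2 * #|W|%:R :> R.
Proof.
pose swap (t : T * T * T) := ((t.2, t.1.2), t.1.1).
pose F t := charge t.1.1 t.1.2 t.2.
have F0 t : 0 <= F t by rewrite addr_ge0 ?child_charge_ge0 ?link_charge_ge0.
apply: le_trans (sum_charge_le); rewrite -sum_triple.
apply: le_trans (@sum_involution_pairs_le _ _ swap _ F _ _ _).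
- apply: ler_sum => [[[x y] z]] /andP [pxyz _] /=.
  case: (boolP (bad_path e W x y z)) => [bad | _]; last by rewrite mulr0 addr_ge0 ?F0.
  by rewrite mulr1; apply: inv_deg_le_charge.
- by move=> [[x y] z].
- move=> [[x y] z] /= /andP [_ lt]; rewrite negb_and; apply/orP; right.
  by rewrite -leqNgt ltnW.
- exact: F0.
Qed.

End Charging.

Section RandomSubset.
Variables (R : comPzRingType) (T : finType) (p : R).

Definition subset_prob (W : {set T}) : R := p ^+ #|W| * (1 - p) ^+ (#|T| - #|W|).

Lemma sum_subset_prob : \sum_W subset_prob W = 1.
Proof.
rewrite /subset_prob (partition_big (fun W : {set T} => inord #|W| : 'I_#|T|.+1) xpredT) //=.
transitivity ((1 - p + p) ^+ #|T|); last by rewrite subrK expr1n.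
rewrite exprDn; apply: eq_bigr => k _.
rewrite (eq_bigl (fun W : {set T} => #|W| == k)); last first.
  move=> W /=; apply/eqP/eqP => [<- | Wk]; first by rewrite inordK // ltnS max_card.
  by apply/val_inj; rewrite /= Wk inordK.
rewrite (eq_bigr (fun _ => p ^+ k * (1 - p) ^+ (#|T| - k))) => [|W /eqP -> //].
by rewrite sumr_const -card_draws cardsE mulrC.
Qed.

Lemma subset_prob_splitU1 v (U : {set T}) : v \notin U ->
  subset_prob U + subset_prob (v |: U) = p ^+ #|U| * (1 - p) ^+ (#|T| - 1 - #|U|).
Proof.
move=> vU; have : (#|U|.+1 <= #|T|)%N by have := max_card (v |: U); rewrite cardsU1 vU.
rewrite /subset_prob cardsU1 vU add1n => lt_UT.
have -> : (#|T| - #|U| = (#|T| - 1 - #|U|).+1)%N by lia.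
have -> : (#|T| - #|U|.+1 = #|T| - 1 - #|U|)%N by lia.
by rewrite !exprS; ring.
Qed.

Lemma subset_prob_setU1 v (U : {set T}) : v \notin U ->
  subset_prob (v |: U) = p * (subset_prob U + subset_prob (v |: U)).
Proof.
move=> vU; rewrite subset_prob_splitU1 // /subset_prob cardsU1 vU add1n exprS.
by rewrite subnS -subn1 subnAC mulrA.
Qed.

Lemma sum_subset_prob_setD1 v (g : {set T} -> R) :
  \sum_W subset_prob W * g (W :\ v)
    = \sum_(U : {set T} | v \notin U) p ^+ #|U| * (1 - p) ^+ (#|T| - 1 - #|U|) * g U.
Proof.
rewrite (big_set_splitU1 v); apply: eq_bigr => U vU.
have -> : U :\ v = U by apply/setDidPl; rewrite disjoint_sym disjoints1.
by rewrite setU1K // -mulrDl subset_prob_splitU1.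
Qed.

Lemma sum_subset_prob_mem v (f : {set T} -> R) : (forall W, f (W :\ v) = f W) ->
  \sum_W subset_prob W * ((v \in W)%:R * f W) = p * \sum_W subset_prob W * f W.
Proof.
move=> fv; rewrite !(big_set_splitU1 v) mulr_sumr; apply: eq_bigr => U vU.
rewrite setU11 (negbTE vU) mul0r mulr0 add0r mul1r -(fv (v |: U)) setU1K //.
by rewrite {1}subset_prob_setU1 // -mulrA mulrDl.
Qed.

Lemma sum_subset_prob_card : \sum_W subset_prob W * #|W|%:R = p * #|T|%:R.
Proof.
have card_sum (W : {set T}) : #|W|%:R = \sum_v (v \in W)%:R :> R.
  by rewrite -sum1_card natr_sum big_mkcond; apply: eq_bigr => v _; case: (v \in W).
under eq_bigr => W _ do rewrite card_sum mulr_sumr.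
rewrite exchange_big -sumr_const mulr_sumr; apply: eq_bigr => v _.
under eq_bigr => W _ do rewrite -[(v \in W)%:R]mulr1.
rewrite sum_subset_prob_mem //.
by under eq_bigr => W _ do rewrite mulr1; rewrite sum_subset_prob.
Qed.

End RandomSubset.

Lemma subset_prob_ge0 (R : numDomainType) (T : finType) (p : R) (W : {set T}) :
  0 <= p <= 1 -> 0 <= subset_prob p W.
Proof. by case/andP=> p0 p1; rewrite mulr_ge0 ?exprn_ge0 ?subr_ge0. Qed.

Section Admissibility.
Variables (R : realType) (T : finType) (e : rel T) (p : R).
Hypotheses (esym : symmetric e) (eirr : irreflexive e).

Lemma not_prob_A_bad_path x y z : path2 e x y z ->
  p ^+ 3 * (1 - prob_A e p x y z) = \sum_W subset_prob p W * (bad_path e W x y z)%:R.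
Proof.
case/and3P=> xy yz xz.
have [xy' yz'] : x != y /\ z != y by rewrite !(edge_neq eirr) // esym.
pose notA (W : {set T}) : R := (~~ `[< A_event e (W :\ y) x z >])%:R.
have notA_setD1 v : v \in [:: x; y; z] -> forall W, notA (W :\ v) = notA W.
  move=> vxyz W.
  have same w : w != x -> w != z -> (w \in W :\ v :\ y) = (w \in W :\ y).
    move=> wx wz; rewrite !in_setD1; have [-> | wy] //= := eqVneq w y.
    by have -> : w != v by move: vxyz; rewrite !inE => /or3P [] /eqP ->.
  rewrite /notA; congr (~~ _)%:R.
  by apply/asboolP/asboolP; apply: A_event_eq => w wx wz; rewrite same.
have -> : 1 - prob_A e p x y z = \sum_W subset_prob p W * notA W.
  rewrite /prob_A -sum_subset_prob_setD1 -[X in X - _](@sum_subset_prob _ T p) -sumrB.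
  by apply: eq_bigr => W _; rewrite /notA; case: asboolP; rewrite ?mulr1 ?mulr0 ?subr0 ?subrr.
have -> : \sum_W subset_prob p W * (bad_path e W x y z)%:R = \sum_W subset_prob p W *
    ((y \in W)%:R * ((x \in W)%:R * ((z \in W)%:R * notA W))).
  apply: eq_bigr => W _; rewrite /bad_path.
  by case: (y \in W); case: (x \in W); case: (z \in W); rewrite ?mul0r ?mul1r.
rewrite sum_subset_prob_mem => [|W]; last by rewrite !inE xy' yz' notA_setD1 // !inE eqxx orbT.
rewrite sum_subset_prob_mem => [|W]; last by rewrite !inE eq_sym xz notA_setD1 // !inE eqxx.
rewrite sum_subset_prob_mem => [|W]; last by apply: notA_setD1; rewrite !inE eqxx !orbT.
by rewrite !exprS expr0 mulr1 !mulrA.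
Qed.

Lemma prob_A_le1 x y z : 0 < p <= 1 -> path2 e x y z -> prob_A e p x y z <= 1.
Proof.
case/andP=> p0 p1 pxyz; rewrite -subr_ge0 -(pmulr_rge0 _ (exprn_gt0 3 p0)).
rewrite not_prob_A_bad_path //; apply: sumr_ge0 => W _.
by rewrite mulr_ge0 // subset_prob_ge0 // ltW.
Qed.

End Admissibility.

Lemma sum_paths_not_prob_A_le (R : realType) (T : finType) (e : rel T) (p : R) :
    symmetric e -> irreflexive e -> 0 < p < 1 ->
  \sum_(t | path2 e t.1.1 t.1.2 t.2 && (enum_rank t.1.1 < enum_rank t.2)%N)
      (deg e t.1.2)%:R^-1 * (1 - prob_A e p t.1.1 t.1.2 t.2)
    <= 3 * #|T|%:R / (2 * p ^+ 2).
Proof.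
move=> esym eirr /andP [p0 p1]; have p3 : 0 < p ^+ 3 by rewrite exprn_gt0.
have -> : \sum_(t | path2 e t.1.1 t.1.2 t.2 && (enum_rank t.1.1 < enum_rank t.2)%N)
      (deg e t.1.2)%:R^-1 * (1 - prob_A e p t.1.1 t.1.2 t.2)
    = (p ^+ 3)^-1 * \sum_W subset_prob p W *
      \sum_(t | path2 e t.1.1 t.1.2 t.2 && (enum_rank t.1.1 < enum_rank t.2)%N)
        (deg e t.1.2)%:R^-1 * (bad_path e W t.1.1 t.1.2 t.2)%:R.
  rewrite [RHS]mulr_sumr; under [RHS]eq_bigr => W _ do rewrite mulrA mulr_sumr.
  rewrite exchange_big; apply: eq_bigr => t /andP [pt _].
  rewrite -[1 - _](mulKf (lt0r_neq0 p3)) not_prob_A_bad_path // !mulr_sumr.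
  by apply: eq_bigr => W _; ring.
apply: (@le_trans _ _ ((p ^+ 3)^-1 * \sum_W subset_prob p W * (3 / 2 * #|W|%:R))).
  rewrite ler_pM2l ?invr_gt0 //; apply: ler_sum => W _.
  apply: ler_wpM2l; first by rewrite subset_prob_ge0 // !ltW.
  have [h [par forest]] := bfs_forest_exists (induced_sym W esym).
  exact: sum_bad_paths_le esym eirr forest.
under eq_bigr => W _ do rewrite mulrCA.
rewrite -mulr_sumr sum_subset_prob_card le_eqVlt; apply/orP; left; apply/eqP; field.
by rewrite lt0r_neq0.
Qed.

Lemma nonadm_sum_lt (R : realType) (T : finType) (e : rel T) (p eps : R) :
    symmetric e -> irreflexive e -> 0 < p < 1 -> 0 < nonadm_sum e p eps ->
  nonadm_sum e p eps * eps <
    \sum_(t | path2 e t.1.1 t.1.2 t.2 && (enum_rank t.1.1 < enum_rank t.2)%N)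
      (deg e t.1.2)%:R^-1 * (1 - prob_A e p t.1.1 t.1.2 t.2).
Proof.
move=> esym eirr /andP [p0 p1] S_pos.
set Q := fun t : T * T * T => path2 e t.1.1 t.1.2 t.2 && (enum_rank t.1.1 < enum_rank t.2)%N.
set B := fun t : T * T * T => ~~ `[< admissible e p eps t.1.1 t.1.2 t.2 >].
have [t0 /andP [Qt0 Bt0] | none] := pickP (fun t => Q t && B t); last first.
  by move: S_pos; rewrite /nonadm_sum big_pred0 ?ltxx // => t; rewrite andbA none.
rewrite /nonadm_sum mulr_suml (eq_bigl (fun t => Q t && B t)) => [|t]; last first.
  by rewrite /Q andbA.
apply: (@lt_le_trans _ _ (\sum_(t | Q t && B t)
    (deg e t.1.2)%:R^-1 * (1 - prob_A e p t.1.1 t.1.2 t.2))).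
  apply: ltr_sum; first by apply/hasP; exists t0; rewrite ?mem_index_enum ?Qt0.
  move=> [[x y] z] /andP [/andP [pxyz _] /asboolPn nadm] /=.
  have deg0 : 0 < (deg e y)%:R^-1 :> R.
    by rewrite invr_gt0 ltr0n; case/and3P: pxyz => _ yz _; apply: deg_gt0 yz.
  by rewrite ltr_pM2l //; move/negP: nadm; rewrite -ltNge; lra.
rewrite [leRHS](bigID B) /= lerDl sumr_ge0 // => t /andP [/andP [pt _] _].
by rewrite mulr_ge0 ?invr_ge0 // subr_ge0 (prob_A_le1 esym eirr) // p0 ltW.
Qed.

Theorem lemma3p4 (R : realType) (T : finType) (e : rel T) (p eps : R) :
  simple_graph e -> (0 < #|T|)%N -> 0 < p < 1 -> 0 < eps < 1 ->
  nonadm_sum e p eps < 3 * (#|T|)%:R / (2 * p ^+ 2 * eps).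
Proof.
move=> [esym eirr] T0 p01 /andP [eps0 _]; have /andP [p0 _] := p01.
rewrite invfM mulrA ltr_pdivlMr //.
have [S0 | S_pos] := lerP (nonadm_sum e p eps) 0.
  apply: le_lt_trans (ler_wpM2r (ltW eps0) S0) _.
  by rewrite mul0r divr_gt0 ?mulr_gt0 ?exprn_gt0 ?ltr0n.
apply: lt_le_trans (nonadm_sum_lt esym eirr p01 S_pos) _.
exact: sum_paths_not_prob_A_le.
Qed.
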